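(* Let $n$, $k$, $t$ be positive integers with $k\geq t+3$ and $n\geq 2k+1+\delta_{2,q}$. For positive integers $x$ define $$g(n,k,t,x)={x-t\brack 1}{n-t-1\brack k-t-1}+q^{x-t}{k-x+1\brack 1}{k-t+1\brack 1}{n-t-2\brack k-t-2}+q^{x-t}{k-x+1\brack 1}+q^{x-t+1}{t\brack 1}{k-t\brack 1}{n-x\brack k-x}+2.$$ Then $g(n,k,t,x)<g(n,k,t,x+1)$ for every $x\in\{t+2,\ldots,k-1\}$.
   Context: $q$ is a prime power and ${m\brack r}$ denotes the Gaussian binomial coefficient $\prod_{i=0}^{r-1}\frac{q^{m-i}-1}{q^{r-i}-1}$ (equal to $1$ for $r=0$). $\delta_{a,b}$ is the Kronecker delta. *)

From mathcomp Require Import all_boot all_order all_algebra.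
Set Implicit Arguments. Unset Strict Implicit. Unset Printing Implicit Defensive.
Import GRing.Theory Num.Theory.
Local Open Scope ring_scope.

Definition gbin (q m r : nat) : rat :=
  \prod_(i < r) (((q%:Q) ^+ (m - i)%N - 1) / ((q%:Q) ^+ (r - i)%N - 1)).

Definition prime_power (q : nat) : Prop := exists p e : nat, prime p /\ (0 < e)%N /\ q = (p ^ e)%N.

(* g(n,k,t,x) from the paper; natural-number subtractions here are all nonnegative
   in the range of use (t+2 <= x <= k). *)
Definition gfun (q n k t x : nat) : rat :=
  gbin q (x - t) 1 * gbin q (n - t - 1) (k - t - 1)
  + (q%:Q) ^+ (x - t) * gbin q (k - x + 1) 1 * gbin q (k - t + 1) 1 * gbin q (n - t - 2) (k - t - 2)
  + (q%:Q) ^+ (x - t) * gbin q (k - x + 1) 1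
  + (q%:Q) ^+ (x - t + 1) * gbin q t 1 * gbin q (k - t) 1 * gbin q (n - x) (k - x)
  + 2.

(* Write [m] for the q-integer [m brack 1].  Since [a+1] = [a] + q^a and
   [d+2] = q [d+1] + 1, the increment g(x+1) - g(x) is
     q^(x-t) (A - [k-t+1] C - 1 - q [t][k-t] D_x) + q^(x-t+2) [t][k-t] D_(x+1)
   with A = [n-t-1 brack k-t-1], C = [n-t-2 brack k-t-2], D_y = [n-y brack k-y].
   The second summand is nonnegative.  In the bracket, A >= q^(n-k) C, and
   D_x <= C because [a+b brack a] grows with a for fixed b; so the bracket is at
   least C (q^(n-k) - [k-t+1] - q [t][k-t]) - 1, which is positive since C >= 1
   and n >= 2k+1+delta_(2,q) makes q^(n-k) exceed 1 + [k-t+1] + q [t][k-t]. *)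

From mathcomp Require Import all_boot all_order all_algebra.
From mathcomp Require Import zify ring lra.
Set Implicit Arguments. Unset Strict Implicit. Unset Printing Implicit Defensive.
Import Order.TTheory GRing.Theory Num.Theory.
Local Open Scope ring_scope.

Section GaussianBinomials.

Variable q : nat.
Hypothesis q_gt1 : (1 < q)%N.
Local Notation Q := (q%:Q).

Lemma Q_gt1 : 1 < Q. Proof. by rewrite ltr1n. Qed.

Lemma gbinSS m r :
  gbin q m.+1 r.+1 = (Q ^+ m.+1 - 1) / (Q ^+ r.+1 - 1) * gbin q m r.
Proof. by rewrite /gbin big_ord_recl /= !subn0. Qed.

Lemma gbin1E m : gbin q m 1 = (Q ^+ m - 1) / (Q - 1).
Proof. by rewrite /gbin big_ord1 /= subn0 expr1. Qed.

Lemma gbin1S m : gbin q m.+1 1 = gbin q m 1 + Q ^+ m.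
Proof.
have Q1_neq0 : Q - 1 != 0 by rewrite subr_eq0 gt_eqF ?Q_gt1.
by rewrite !gbin1E exprS; field.
Qed.

Lemma gbin1SQ m : gbin q m.+1 1 = Q * gbin q m 1 + 1.
Proof.
have Q1_neq0 : Q - 1 != 0 by rewrite subr_eq0 gt_eqF ?Q_gt1.
by rewrite !gbin1E exprS; field.
Qed.

Lemma gbin_factor_ge1 m r : (r <= m)%N -> 1 <= (Q ^+ m.+1 - 1) / (Q ^+ r.+1 - 1).
Proof.
move=> le_rm; have Qr_gt1 : 1 < Q ^+ r.+1 by rewrite exprn_egt1 ?Q_gt1.
have : Q ^+ r.+1 <= Q ^+ m.+1 by rewrite ler_eXn2l ?Q_gt1.
by rewrite ler_pdivlMr ?subr_gt0 // mul1r; lra.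
Qed.

Lemma gbin_ge1 m r : (r <= m)%N -> 1 <= gbin q m r.
Proof.
elim: r m => [m _|r IHr [//|m] le_rm]; first by rewrite /gbin big_ord0.
rewrite gbinSS -[1]mulr1; apply: ler_pM => //; last exact: IHr.
exact: gbin_factor_ge1.
Qed.

Lemma gbin_ge0 m r : (r <= m)%N -> 0 <= gbin q m r.
Proof. by move=> /gbin_ge1; apply: le_trans. Qed.

Lemma gbin_codim_mono b j a : (j <= a)%N -> gbin q (j + b) j <= gbin q (a + b) a.
Proof.
elim: a => [|a IHa]; first by rewrite leqn0 => /eqP ->.
rewrite leq_eqVlt => /orP [/eqP -> //|]; rewrite ltnS => le_ja.
apply: le_trans (IHa le_ja) _; rewrite addSn gbinSS -{1}[gbin _ _ _]mul1r.
by apply: ler_pM => //; [apply: gbin_ge0 | apply: gbin_factor_ge1]; exact: leq_addr.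
Qed.

Lemma gbinSS_ge m b : Q ^+ b * gbin q (m + b) m <= gbin q (m + b).+1 m.+1.
Proof.
rewrite gbinSS ler_wpM2r ?gbin_ge0 ?leq_addr //.
have Qm_gt1 : 1 < Q ^+ m.+1 by rewrite exprn_egt1 ?Q_gt1.
have Qb_ge1 : 1 <= Q ^+ b by rewrite exprn_ege1 // ltW ?Q_gt1.
rewrite ler_pdivlMr ?subr_gt0 // -addSn exprD; nra.
Qed.

Lemma gbin1_sum_lt_exp t s : (0 < t)%N -> (0 < s)%N ->
  1 + gbin q s.+1 1 + Q * gbin q t 1 * gbin q s 1 < Q ^+ (t + s + 1 + (q == 2%N)).
Proof.
move=> t_gt0 s_gt0; have Q1 := Q_gt1.
have Qt_ge : Q <= Q ^+ t by rewrite -{1}[Q]expr1 ler_eXn2l.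
have Qs_ge : Q <= Q ^+ s by rewrite -{1}[Q]expr1 ler_eXn2l.
rewrite !gbin1E exprS !exprD expr1.
move: (Q ^+ t) (Q ^+ s) Qt_ge Qs_ge => u v Qu Qv.
have -> : 1 + (Q * v - 1) / (Q - 1) + Q * ((u - 1) / (Q - 1)) * ((v - 1) / (Q - 1))
    = ((Q - 1) ^+ 2 + (Q - 1) * (Q * v - 1) + Q * (u - 1) * (v - 1)) / (Q - 1) ^+ 2.
  by field; rewrite subr_eq0 gt_eqF.
rewrite ltr_pdivrMr ?exprn_gt0 ?subr_gt0 //.
have uv_ge : Q * v <= u * v by rewrite ler_pM2r //; lra.
have [q2|q_neq2] := eqVneq q 2%N.
  have Q2 : Q = 2 by rewrite q2.
  by rewrite /= expr1 Q2 in Qu Qv uv_ge *; nra.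
have Q_ge3 : 3 <= Q by rewrite ler_nat; lia.
have QQ_le : Q * Q <= u * v by nra.
have uvQ_ge : 4 * (Q * (u * v)) <= (Q - 1) ^+ 2 * (Q * (u * v)).
  by rewrite ler_pM2r; nra.
rewrite /= expr0 mulr1; nra.
Qed.

End GaussianBinomials.

Section Increment.

Variable q : nat.
Hypothesis q_gt1 : (1 < q)%N.
Local Notation Q := (q%:Q).

Lemma gfun_increment n k t x : (t <= x)%N -> (x < k)%N ->
  gfun q n k t x.+1 - gfun q n k t x =
    Q ^+ (x - t) * (gbin q (n - t - 1) (k - t - 1)
                    - gbin q (k - t + 1) 1 * gbin q (n - t - 2) (k - t - 2) - 1
                    - Q * gbin q t 1 * gbin q (k - t) 1 * gbin q (n - x) (k - x))
  + Q ^+ (x - t + 2) * gbin q t 1 * gbin q (k - t) 1 * gbin q (n - x.+1) (k - x.+1).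
Proof.
move=> le_tx lt_xk; rewrite /gfun.
have -> : (x.+1 - t = (x - t).+1)%N by lia.
have -> : (k - x + 1 = (k - x.+1).+2)%N by lia.
rewrite (gbin1S q_gt1 (x - t)) (gbin1SQ q_gt1 (k - x.+1).+1) !addn1 !addn2 !exprS; ring.
Qed.

Lemma gfun_increment_core_gt0 n k t x :
  (0 < t)%N -> (t + 2 <= x)%N -> (x < k)%N -> (2 * k + 1 + (q == 2%N) <= n)%N ->
  0 < gbin q (n - t - 1) (k - t - 1)
      - gbin q (k - t + 1) 1 * gbin q (n - t - 2) (k - t - 2) - 1
      - Q * gbin q t 1 * gbin q (k - t) 1 * gbin q (n - x) (k - x).
Proof.
move=> t_gt0 tx xk kn; set b := (n - k)%N.
have C_ge1 : 1 <= gbin q (n - t - 2) (k - t - 2) by apply: gbin_ge1; lia.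
have A_ge : Q ^+ b * gbin q (n - t - 2) (k - t - 2) <= gbin q (n - t - 1) (k - t - 1).
  have -> : (n - t - 1 = (k - t - 2 + b).+1)%N by lia.
  have -> : (k - t - 1 = (k - t - 2).+1)%N by lia.
  have -> : (n - t - 2 = k - t - 2 + b)%N by lia.
  exact: gbinSS_ge.
have D_le : gbin q (n - x) (k - x) <= gbin q (n - t - 2) (k - t - 2).
  have -> : (n - x = k - x + b)%N by lia.
  have -> : (n - t - 2 = k - t - 2 + b)%N by lia.
  apply: gbin_codim_mono; lia.
have E_gt : 1 + gbin q (k - t + 1) 1 + Q * gbin q t 1 * gbin q (k - t) 1 < Q ^+ b.
  have kt_gt0 : (0 < k - t)%N by lia.
  rewrite addn1; apply: lt_le_trans (gbin1_sum_lt_exp q_gt1 t_gt0 kt_gt0) _.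
  by rewrite ler_eXn2l ?Q_gt1 //; lia.
have : 0 <= Q * gbin q t 1 * gbin q (k - t) 1 by rewrite !mulr_ge0 ?gbin_ge0 ?ler0n //; lia.
nra.
Qed.

End Increment.

Theorem lemma2p4 (q n k t : nat) :
  prime_power q -> (0 < n)%N -> (0 < k)%N -> (0 < t)%N ->
  (t + 3 <= k)%N -> (2 * k + 1 + (q == 2%N) <= n)%N ->
  forall x : nat, (t + 2 <= x)%N -> (x <= k - 1)%N ->
  gfun q n k t x < gfun q n k t x.+1.
Proof.
move=> [p [e [p_prime [e_gt0 q_def]]]] _ _ t_gt0 tk kn x tx xk.
have q_gt1 : (1 < q)%N by rewrite q_def -(exp1n e) ltn_exp2r // prime_gt1.
have lt_xk : (x < k)%N by lia.
rewrite -subr_gt0 gfun_increment //; last lia.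
apply: ltr_wpDr; first by rewrite !mulr_ge0 ?exprn_ge0 ?gbin_ge0 ?ler0n //; lia.
by rewrite mulr_gt0 ?exprn_gt0 ?ltr0n ?(gfun_increment_core_gt0 q_gt1) //; lia.
Qed.
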